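(* Under the standing setup, assume that $f$ is bounded, i.e. $\sup_{q\in\mathcal P}\|f_q\|_\infty<\infty$. Then for all $t\ge0$ and $u_0\in\mathbb R^d$, $\|\mathscr S(t)u_0-u_0\|_\infty\le t\sup_{q\in\mathcal P}\|qu_0+f_q\|_\infty,$ and for all $s,t\ge0$, $\|\mathscr S(t)u_0-\mathscr S(s)u_0\|_\infty\le|t-s|\sup_{q\in\mathcal P}\|qu_0+f_q\|_\infty$. In particular $t\mapsto\mathscr S(t)u_0$ is Lipschitz continuous.
   Context: Standing setup: $d\in\mathbb N$; vectors in $\mathbb R^d$ with $\|u\|_\infty=\max_i|u_i|$; inequalities and suprema of vectors are componentwise; reals are identified with constant vectors. A $Q$-matrix is $q\in\mathbb R^{d\times d}$ with $q_{ii}\le0$, $q_{ij}\ge0$ ($i\ne j$), $\sum_jq_{ij}=0$. Let $\mathcal P$ be a set of $Q$-matrices and $f=(f_q)_{q\in\mathcal P}\subset\mathbb R^d$ with $\sup_{q\in\mathcal P}f_q=f_{q_0}=0$ for some $q_0\in\mathcal P$, such that $\mathcal Qu:=\sup_{q\in\mathcal P}(qu+f_q)$ is finite for every $u\in\mathbb R^d$. For $q\in\mathcal P$, $t\ge0$: $S_q(t)u_0:=e^{tq}u_0+\int_0^te^{sq}f_q\,ds$. For $h\ge0$: $\mathcal E_hu_0:=\sup_{q\in\mathcal P}S_q(h)u_0$. $P$ is the set of finite subsets $\pi\subset[0,\infty)$ with $0\in\pi$; $P_t:=\{\pi\in P:\max\pi=t\}$. For $\pi=\{t_0,\dots,t_m\}$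 with $0=t_0<\dots<t_m$, $m\ge1$, $\mathcal E_\pi:=\mathcal E_{t_1-t_0}\circ\cdots\circ\mathcal E_{t_m-t_{m-1}}$, and $\mathcal E_{\{0\}}:=\mathcal E_0$. The Nisio semigroup of $(\mathcal P,f)$ is $\mathscr S(t)u_0:=\sup_{\pi\in P_t}\mathcal E_\pi u_0$ for $t\ge0$, $u_0\in\mathbb R^d$. *)

From Stdlib Require Import Reals Lra Lia List Sorted ClassicalEpsilon Factorial.
Open Scope R_scope.

(* Vectors in R^d: functions nat -> R, only indices i < d are meaningful.
   Matrices in R^{d x d}: functions nat -> nat -> R, only i,j < d meaningful. *)
Definition vec := nat -> R.
Definition mat := nat -> nat -> R.

Definition vnorm (d : nat) (u : vec) : R :=
  fold_right Rmax 0 (map (fun i => Rabs (u i)) (seq 0 d)).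

Definition vsub (u v : vec) : vec := fun i => u i - v i.
Definition vadd (u v : vec) : vec := fun i => u i + v i.

Definition fsum (d : nat) (g : nat -> R) : R :=
  fold_right Rplus 0 (map g (seq 0 d)).

Definition mv (d : nat) (q : mat) (u : vec) : vec :=
  fun i => fsum d (fun j => q i j * u j).
Definition mm (d : nat) (a b : mat) : mat :=
  fun i j => fsum d (fun k => a i k * b k j).
Definition mid : mat := fun i j => if Nat.eqb i j then 1 else 0.
Fixpoint mpow (d : nat) (q : mat) (k : nat) : mat :=
  match k with O => mid | S k' => mm d q (mpow d q k') end.

Definition isQmatrix (d : nat) (q : mat) : Prop :=
  (forall i, (i < d)%nat -> q i i <= 0) /\
  (forall i j, (i < d)%nat -> (j < d)%nat -> i <> j -> 0 <= q i j) /\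
  (forall i, (i < d)%nat -> fsum d (fun j => q i j) = 0).

(* limit of a real sequence (arbitrary value if it does not converge) *)
Definition Rlim (u : nat -> R) : R :=
  epsilon (inhabits 0) (fun l => Un_cv u l).

Definition mexp (d : nat) (q : mat) (t : R) : mat :=
  fun i j => Rlim (fun n => sum_f_R0 (fun k => t ^ k / INR (fact k) * mpow d q k i j) n).

(* Riemann integral of g over [a,b] (arbitrary value if not integrable;
   independent of the integrability proof by RiemannInt_P5) *)
Definition Rint (g : R -> R) (a b : R) : R :=
  epsilon (inhabits 0)
    (fun I => exists pr : Riemann_integrable g a b, RiemannInt pr = I).

(* supremum of a set of reals (arbitrary value if no least upper bound) *)
Definition Rsup (E : R -> Prop) : R :=
  epsilon (inhabits 0) (fun l => is_lub E l).

Definition Sq (d : nat) (q : mat) (fq : vec) (t : R) (u0 : vec) : vec :=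
  fun i => mv d (mexp d q t) u0 i + Rint (fun s => mv d (mexp d q s) fq i) 0 t.

Definition Eh (d : nat) (P : mat -> Prop) (f : mat -> vec) (h : R) (u0 : vec) : vec :=
  fun i => Rsup (fun x => exists q, P q /\ x = Sq d q (f q) h u0 i).

(* A partition pi = {t_0 < t_1 < ... < t_m} is represented by the strictly
   increasing list [t_0; ...; t_m]. pi in P_t iff t_0 = 0 and t_m = t. *)
Definition inPt (t : R) (l : list R) : Prop :=
  l <> nil /\ hd 1 l = 0 /\ Sorted Rlt l /\ last l 0 = t.

Fixpoint Ecomp (d : nat) (P : mat -> Prop) (f : mat -> vec) (l : list R) (u0 : vec) : vec :=
  match l with
  | t0 :: ((t1 :: _) as rest) => Eh d P f (t1 - t0) (Ecomp d P f rest u0)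
  | _ => u0
  end.

Definition Epi (d : nat) (P : mat -> Prop) (f : mat -> vec) (l : list R) (u0 : vec) : vec :=
  match l with
  | _ :: nil => Eh d P f 0 u0
  | _ => Ecomp d P f l u0
  end.

Definition Nisio (d : nat) (P : mat -> Prop) (f : mat -> vec) (t : R) (u0 : vec) : vec :=
  fun i => Rsup (fun x => exists l, inPt t l /\ x = Epi d P f l u0 i).

Definition standing_setup (d : nat) (P : mat -> Prop) (f : mat -> vec) : Prop :=
  (forall q, P q -> isQmatrix d q) /\
  (exists q0, P q0 /\ (forall i, (i < d)%nat -> f q0 i = 0) /\
     (forall q i, P q -> (i < d)%nat -> f q i <= 0)) /\
  (forall (u : vec) i, (i < d)%nat ->
     bound (fun x => exists q, P q /\ x = mv d q u i + f q i)).

From Stdlib Require Import Reals Lra Lia List Sorted ClassicalEpsilon Factorial FunctionalExtensionality.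
From Coquelicot Require Import Coquelicot.
Open Scope R_scope.

(* For a Q-matrix q, e^{tq} is a stochastic matrix: its rows sum to 1 because those of q
   sum to 0, and its entries are nonnegative because e^{ct} e^{tq} has the nonnegative
   Taylor coefficients (q + cI)^n / n! once c dominates the diagonal of -q.  Hence S_q(t)
   is nonexpansive in the sup norm, and since d/dt S_q(t)u = e^{tq}(qu + f_q), it moves u
   by at most t ||qu + f_q||.  Both estimates survive the supremum over q, so E_h is
   nonexpansive and moves u_0 by at most hL; along a partition of [0, t] the composite
   E_pi then moves u_0 by at most tL.  For s <= t, refining a partition of [0, s] by the
   point t, or cutting a partition of [0, t] at s, matches every E_pi for one endpoint
   with one for the other up to (t - s)L. *)

(** * Finite sums and the sup norm *)

Lemma fold_right_Rplus_acc l a : fold_right Rplus a l = fold_right Rplus 0 l + a.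
Proof. induction l as [|x l IH]; simpl; [lra | rewrite IH; lra]. Qed.

Lemma fsum_0 g : fsum 0 g = 0.
Proof. reflexivity. Qed.

Lemma fsum_S d g : fsum (S d) g = fsum d g + g d.
Proof.
  unfold fsum. rewrite seq_S, map_app, fold_right_app. simpl.
  rewrite fold_right_Rplus_acc. lra.
Qed.

Lemma fsum_ext d g h : (forall j, (j < d)%nat -> g j = h j) -> fsum d g = fsum d h.
Proof.
  induction d as [|d IH]; intros H; [reflexivity|].
  rewrite !fsum_S, (H d) by lia. rewrite IH; [reflexivity|]. intros; apply H; lia.
Qed.

Lemma fsum_plus d g h : fsum d (fun j => g j + h j) = fsum d g + fsum d h.
Proof. induction d; [rewrite !fsum_0; lra|]. rewrite !fsum_S, IHd; lra. Qed.

Lemma fsum_scal_l d c g : fsum d (fun j => c * g j) = c * fsum d g.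
Proof. induction d; [rewrite !fsum_0; lra|]. rewrite !fsum_S, IHd; lra. Qed.

Lemma fsum_scal_r d c g : fsum d (fun j => g j * c) = fsum d g * c.
Proof. induction d; [rewrite !fsum_0; lra|]. rewrite !fsum_S, IHd; lra. Qed.

Lemma fsum_const d c : fsum d (fun _ => c) = INR d * c.
Proof. induction d; [rewrite fsum_0; simpl; lra|]. rewrite fsum_S, IHd, S_INR; lra. Qed.

Lemma fsum_swap d e (g : nat -> nat -> R) :
  fsum d (fun i => fsum e (fun j => g i j)) = fsum e (fun j => fsum d (fun i => g i j)).
Proof.
  induction d as [|d IH].
  - rewrite fsum_0, <- (Rmult_0_r (INR e)), <- fsum_const. apply fsum_ext. reflexivity.
  - rewrite fsum_S, IH, <- fsum_plus. apply fsum_ext. intros. rewrite fsum_S. reflexivity.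
Qed.

Lemma sum_f_R0_fsum_swap d (g : nat -> nat -> R) n :
  sum_f_R0 (fun k => fsum d (g k)) n = fsum d (fun l => sum_f_R0 (fun k => g k l) n).
Proof. induction n as [|n IH]; simpl; [reflexivity|]. rewrite IH, <- fsum_plus. reflexivity. Qed.

Lemma fsum_le d g h : (forall j, (j < d)%nat -> g j <= h j) -> fsum d g <= fsum d h.
Proof.
  induction d as [|d IH]; intros H; [rewrite !fsum_0; lra|]. rewrite !fsum_S.
  apply Rplus_le_compat; [apply IH; intros; apply H|apply H]; lia.
Qed.

Lemma fsum_nonneg d g : (forall j, (j < d)%nat -> 0 <= g j) -> 0 <= fsum d g.
Proof. intros H. rewrite <- (Rmult_0_r (INR d)), <- fsum_const. exact (fsum_le _ _ _ H). Qed.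

Lemma fsum_abs d g : Rabs (fsum d g) <= fsum d (fun j => Rabs (g j)).
Proof.
  induction d; [rewrite !fsum_0, Rabs_R0; lra|]. rewrite !fsum_S.
  eapply Rle_trans; [apply Rabs_triang|]. lra.
Qed.

Lemma fsum_ge_term d g j :
  (j < d)%nat -> (forall l, (l < d)%nat -> 0 <= g l) -> g j <= fsum d g.
Proof.
  induction d as [|d IH]; intros Hj H; [lia|]. rewrite fsum_S.
  destruct (Nat.eq_dec j d) as [->|Hjd].
  - assert (0 <= fsum d g) by (apply fsum_nonneg; intros; apply H; lia). lra.
  - assert (g j <= fsum d g) by (apply IH; [lia | intros; apply H; lia]).
    assert (0 <= g d) by (apply H; lia). lra.
Qed.

Lemma fsum_mid_l d i x : (i < d)%nat -> fsum d (fun j => mid i j * x j) = x i.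
Proof.
  induction d as [|d IH]; intros Hi; [lia|]. rewrite fsum_S. unfold mid at 2.
  destruct (Nat.eqb_spec i d) as [->|Hid].
  - rewrite (fsum_ext _ _ (fun _ => 0)), fsum_const; [lra|].
    intros j Hj. unfold mid. destruct (Nat.eqb_spec d j); [lia | lra].
  - rewrite IH by lia. lra.
Qed.

Lemma fsum_mid_r d i x : (i < d)%nat -> fsum d (fun j => x j * mid j i) = x i.
Proof.
  intros Hi. rewrite <- (fsum_mid_l d i x Hi). apply fsum_ext. intros j _.
  unfold mid. rewrite Nat.eqb_sym. destruct (Nat.eqb i j); lra.
Qed.

Lemma Rabs_le_vnorm d u i : (i < d)%nat -> Rabs (u i) <= vnorm d u.
Proof.
  intros Hi. unfold vnorm.
  assert (Hin : In i (seq 0 d)) by (apply in_seq; lia). revert Hin.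
  induction (seq 0 d) as [|k l IH]; simpl; [tauto|]. intros [->|Hin].
  - apply Rmax_l.
  - eapply Rle_trans; [apply IH; auto | apply Rmax_r].
Qed.

Lemma vnorm_nonneg d u : 0 <= vnorm d u.
Proof.
  unfold vnorm. induction (seq 0 d); simpl; [lra|].
  eapply Rle_trans; [apply IHl | apply Rmax_r].
Qed.

Lemma vnorm_le d u c :
  0 <= c -> (forall i, (i < d)%nat -> Rabs (u i) <= c) -> vnorm d u <= c.
Proof.
  intros Hc H. unfold vnorm.
  assert (Hl : forall i, In i (seq 0 d) -> Rabs (u i) <= c)
    by (intros i Hi; apply in_seq in Hi; apply H; lia).
  revert Hl. induction (seq 0 d); simpl; intros Hl; [lra|].
  apply Rmax_lub; auto.
Qed.

Lemma vnorm_ext d u v : (forall i, (i < d)%nat -> u i = v i) -> vnorm d u = vnorm d v.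
Proof.
  intros H. unfold vnorm. f_equal. apply map_ext_in.
  intros i Hi. apply in_seq in Hi. rewrite H; [reflexivity | lia].
Qed.

Lemma vnorm_sub_sym d u v : vnorm d (vsub u v) = vnorm d (vsub v u).
Proof.
  unfold vnorm, vsub. f_equal. apply map_ext. intros. apply Rabs_minus_sym.
Qed.

Lemma vnorm_sub_triangle d u v w : vnorm d (vsub u w) <= vnorm d (vsub u v) + vnorm d (vsub v w).
Proof.
  pose proof (vnorm_nonneg d (vsub u v)). pose proof (vnorm_nonneg d (vsub v w)).
  apply vnorm_le; [lra|]. intros i Hi. unfold vsub at 1.
  replace (u i - w i) with (vsub u v i + vsub v w i) by (unfold vsub; ring).
  eapply Rle_trans; [apply Rabs_triang|].
  apply Rplus_le_compat; apply Rabs_le_vnorm; auto.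
Qed.

Lemma vnorm_sub_diag d u : vnorm d (vsub u u) = 0.
Proof.
  apply Rle_antisym; [|apply vnorm_nonneg]. apply vnorm_le; [lra|].
  intros. unfold vsub. rewrite Rminus_diag, Rabs_R0. lra.
Qed.

(** * Matrix powers and power series *)

Lemma mpow_S d q k i j : mpow d q (S k) i j = fsum d (fun l => q i l * mpow d q k l j).
Proof. reflexivity. Qed.

Lemma mpow_S_r d q k i j : (i < d)%nat -> (j < d)%nat ->
  mpow d q (S k) i j = fsum d (fun l => mpow d q k i l * q l j).
Proof.
  revert i j. induction k as [|k IH]; intros i j Hi Hj.
  - rewrite mpow_S. simpl. rewrite fsum_mid_r, fsum_mid_l by auto. reflexivity.
  - rewrite mpow_S.
    rewrite (fsum_ext _ _ (fun l => fsum d (fun m => q i l * mpow d q k l m * q m j)))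
      by (intros; rewrite IH, <- fsum_scal_l by auto; apply fsum_ext; intros; ring).
    rewrite fsum_swap. apply fsum_ext. intros m _. rewrite mpow_S, <- fsum_scal_r. reflexivity.
Qed.

Definition mabs_sum d (q : mat) : R := fsum d (fun a => fsum d (fun b => Rabs (q a b))).

Lemma mabs_sum_nonneg d q : 0 <= mabs_sum d q.
Proof. apply fsum_nonneg. intros. apply fsum_nonneg. intros. apply Rabs_pos. Qed.

Lemma Rabs_le_mabs_sum d q a b : (a < d)%nat -> (b < d)%nat -> Rabs (q a b) <= mabs_sum d q.
Proof.
  intros Ha Hb. unfold mabs_sum. eapply Rle_trans; [|apply (fsum_ge_term _ _ a Ha)].
  - apply (fsum_ge_term _ (fun b => Rabs (q a b))); auto. intros. apply Rabs_pos.
  - intros. apply fsum_nonneg. intros. apply Rabs_pos.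
Qed.

Lemma Rabs_mpow_le d q K : 0 <= K ->
  (forall a b, (a < d)%nat -> (b < d)%nat -> Rabs (q a b) <= K) ->
  forall k i j, (i < d)%nat -> (j < d)%nat -> Rabs (mpow d q k i j) <= (INR d * K) ^ k.
Proof.
  intros HK Hq k. induction k as [|k IH]; intros i j Hi Hj.
  - simpl. unfold mid. destruct (Nat.eqb i j); rewrite ?Rabs_R1, ?Rabs_R0; lra.
  - rewrite mpow_S. eapply Rle_trans; [apply fsum_abs|].
    eapply Rle_trans; [apply (fsum_le _ _ (fun _ => K * (INR d * K) ^ k))|].
    + intros l Hl. rewrite Rabs_mult. apply Rmult_le_compat; auto using Rabs_pos.
    + rewrite fsum_const. simpl. lra.
Qed.

Lemma mpow_row_sum d q : (forall i, (i < d)%nat -> fsum d (q i) = 0) ->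
  forall k i, (i < d)%nat -> fsum d (mpow d q k i) = match k with O => 1 | S _ => 0 end.
Proof.
  intros Hq k. induction k as [|k IH]; intros i Hi.
  - simpl. rewrite <- (fsum_mid_l d i (fun _ => 1) Hi). apply fsum_ext. intros. ring.
  - rewrite (fsum_ext _ _ (fun j => fsum d (fun l => q i l * mpow d q k l j))) by reflexivity.
    rewrite <- fsum_swap.
    rewrite (fsum_ext _ _ (fun l => q i l * match k with O => 1 | S _ => 0 end))
      by (intros; rewrite fsum_scal_l, IH; auto).
    rewrite fsum_scal_r, Hq by auto. ring.
Qed.

Lemma Un_cv_const c : Un_cv (fun _ => c) c.
Proof. intros eps Heps. exists O. intros. unfold Rdist. rewrite Rminus_diag, Rabs_R0. lra. Qed.

Lemma is_pseries_Un_cv a x l :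
  is_pseries a x l <-> Un_cv (fun n => sum_f_R0 (fun k => a k * x ^ k) n) l.
Proof. rewrite is_pseries_R. split; apply is_series_Reals. Qed.

Lemma CV_radius_infinite a N : 0 <= N ->
  (forall n, Rabs (a n) <= N ^ n / INR (fact n)) -> CV_radius a = p_infty.
Proof.
  intros HN Ha. destruct (CV_radius_bounded a) as [Hub _].
  assert (Hbd : forall r, exists M, forall n, Rabs (a n * r ^ n) <= M).
  { intros r. exists (exp (N * Rabs r)). intros n.
    assert (Hpos : forall k, 0 <= (N * Rabs r) ^ k / INR (fact k)).
    { intros k. apply Rmult_le_pos; [apply pow_le, Rmult_le_pos; auto using Rabs_pos|].
      left; apply Rinv_0_lt_compat, INR_fact_lt_0. }
    eapply Rle_trans; [|apply (exp_ge_taylor (N * Rabs r) n), Rmult_le_pos; auto using Rabs_pos].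
    eapply Rle_trans with ((N * Rabs r) ^ n / INR (fact n)).
    - rewrite Rabs_mult, <- RPow_abs, Rpow_mult_distr. unfold Rdiv.
      rewrite (Rmult_comm (N ^ n)), Rmult_assoc, (Rmult_comm (Rabs r ^ n)).
      apply Rmult_le_compat_r; [apply pow_le, Rabs_pos | apply Ha].
    - destruct n as [|n]; simpl; [lra|].
      pose proof (cond_pos_sum _ n Hpos). lra. }
  destruct (CV_radius a) as [c| |] eqn:E; auto; exfalso.
  - specialize (Hub (c + 1) (Hbd (c + 1))). simpl in Hub. lra.
  - exact (Hub 0 (Hbd 0)).
Qed.

Lemma PSeries_Un_cv a x : CV_radius a = p_infty ->
  Un_cv (fun n => sum_f_R0 (fun k => a k * x ^ k) n) (PSeries a x).
Proof.
  intros H. apply is_pseries_Un_cv, PSeries_correct, CV_radius_inside. rewrite H. exact I.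
Qed.

Lemma sum_f_R0_le_PSeries a x N : 0 <= x -> ex_pseries a x ->
  (forall n, 0 <= a n) -> sum_f_R0 (fun k => a k * x ^ k) N <= PSeries a x.
Proof.
  intros Hx He Ha. apply sum_incr; [apply is_pseries_Un_cv, PSeries_correct, He|].
  intros n. apply Rmult_le_pos; auto. apply pow_le; auto.
Qed.

Lemma is_pseries_fsum d (w : nat -> R) (g : nat -> nat -> R) x :
  (forall l, (l < d)%nat -> CV_radius (g l) = p_infty) ->
  is_pseries (fun n => fsum d (fun l => w l * g l n)) x (fsum d (fun l => w l * PSeries (g l) x)).
Proof.
  induction d as [|d IH]; intros H; apply is_pseries_Un_cv.
  - rewrite fsum_0. apply (Un_cv_ext (fun _ => 0)); [|apply Un_cv_const].
    intros n. rewrite (sum_eq _ (fun _ => 0)), sum_cte by (intros; rewrite fsum_0; ring). ring.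
  - rewrite fsum_S.
    apply (Un_cv_ext (fun n => sum_f_R0 (fun k => fsum d (fun l => w l * g l k) * x ^ k) n
                           + w d * sum_f_R0 (fun k => g d k * x ^ k) n)).
    { intros n. rewrite scal_sum, <- sum_plus. apply sum_eq. intros. rewrite fsum_S. ring. }
    apply CV_plus; [apply is_pseries_Un_cv, IH; intros; apply H; lia|].
    apply CV_mult; [apply Un_cv_const | apply PSeries_Un_cv, H; lia].
Qed.

Lemma Rlim_correct u l : Un_cv u l -> Rlim u = l.
Proof.
  intros H. unfold Rlim.
  apply (UL_sequence u); [|exact H].
  exact (epsilon_spec (inhabits 0) (fun l => Un_cv u l) (ex_intro _ l H)).
Qed.

(** * The matrix exponential *)

Definition mexp_coef d (q : mat) i j (k : nat) : R := mpow d q k i j / INR (fact k).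
Definition mexp_series d (q : mat) (t : R) i j : R := PSeries (mexp_coef d q i j) t.

Lemma mexp_coef_CV_radius d q i j :
  (i < d)%nat -> (j < d)%nat -> CV_radius (mexp_coef d q i j) = p_infty.
Proof.
  intros Hi Hj. apply (CV_radius_infinite _ (INR d * mabs_sum d q)).
  - apply Rmult_le_pos; [apply pos_INR | apply mabs_sum_nonneg].
  - intros n. unfold mexp_coef, Rdiv.
    rewrite Rabs_mult, Rabs_inv, (Rabs_pos_eq (INR (fact n))) by (left; apply INR_fact_lt_0).
    apply Rmult_le_compat_r; [left; apply Rinv_0_lt_compat, INR_fact_lt_0|].
    apply Rabs_mpow_le; auto using mabs_sum_nonneg, Rabs_le_mabs_sum.
Qed.

Lemma mexp_eq_series d q t i j :
  (i < d)%nat -> (j < d)%nat -> mexp d q t i j = mexp_series d q t i j.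
Proof.
  intros Hi Hj. apply Rlim_correct.
  apply (Un_cv_ext (fun n => sum_f_R0 (fun k => mexp_coef d q i j k * t ^ k) n)).
  - intros n. apply sum_eq. intros k _. unfold mexp_coef. field. apply INR_fact_neq_0.
  - apply PSeries_Un_cv, mexp_coef_CV_radius; auto.
Qed.

Lemma mexp_series_0 d q i j : mexp_series d q 0 i j = mid i j.
Proof. unfold mexp_series. rewrite PSeries_0. unfold mexp_coef. simpl. field. Qed.

Lemma PS_derive_mexp_coef d q i j n : (i < d)%nat -> (j < d)%nat ->
  PS_derive (mexp_coef d q i j) n = fsum d (fun l => q l j * mexp_coef d q i l n).
Proof.
  intros Hi Hj. unfold PS_derive, mexp_coef.
  rewrite mpow_S_r, fact_simpl, mult_INR by auto. unfold Rdiv. rewrite <- fsum_scal_r, <- fsum_scal_l.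
  apply fsum_ext. intros. field. split; [apply INR_fact_neq_0 | apply not_0_INR; lia].
Qed.

Lemma is_derive_mexp_series d q t i j : (i < d)%nat -> (j < d)%nat ->
  is_derive (fun s => mexp_series d q s i j) t (fsum d (fun l => q l j * mexp_series d q t i l)).
Proof.
  intros Hi Hj. unfold mexp_series.
  replace (fsum d (fun l => q l j * PSeries (mexp_coef d q i l) t))
    with (PSeries (PS_derive (mexp_coef d q i j)) t).
  - apply is_derive_PSeries. rewrite mexp_coef_CV_radius by auto. exact I.
  - apply is_pseries_unique.
    apply (is_pseries_ext (fun n => fsum d (fun l => q l j * mexp_coef d q i l n))).
    + intros n. symmetry. apply PS_derive_mexp_coef; auto.
    + apply is_pseries_fsum. intros. apply mexp_coef_CV_radius; auto.
Qed.

Lemma mexp_series_row_sum d q t i : (forall a, (a < d)%nat -> fsum d (q a) = 0) ->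
  (i < d)%nat -> fsum d (fun j => mexp_series d q t i j) = 1.
Proof.
  intros Hq Hi.
  assert (Hcoef : forall n, fsum d (fun j => 1 * mexp_coef d q i j n)
                            = match n with O => 1 | S _ => 0 end).
  { intros n. unfold mexp_coef. unfold Rdiv.
    rewrite (fsum_ext _ _ (fun j => mpow d q n i j * / INR (fact n))) by (intros; ring).
    rewrite fsum_scal_r. change (fsum d (fun j => mpow d q n i j)) with (fsum d (mpow d q n i)).
    rewrite mpow_row_sum by auto. destruct n; simpl; [field | ring]. }
  assert (Hsum : is_pseries (fun n => fsum d (fun j => 1 * mexp_coef d q i j n)) t 1).
  { apply is_pseries_Un_cv, (Un_cv_ext (fun _ => 1)); [|apply Un_cv_const].
    intros n. rewrite (sum_eq _ (fun k => match k with O => 1 | S _ => 0 end))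
      by (intros k _; rewrite Hcoef; destruct k; simpl; ring).
    induction n as [|n IH]; simpl; [reflexivity|]. rewrite <- IH. ring. }
  pose proof (is_pseries_fsum d (fun _ => 1) (mexp_coef d q i) t
                (fun j Hj => mexp_coef_CV_radius d q i j Hi Hj)) as Hfsum.
  cbv beta in Hfsum.
  rewrite (fsum_ext _ _ (fun j => 1 * mexp_series d q t i j)) by (intros; ring).
  unfold mexp_series.
  rewrite <- (is_pseries_unique _ _ _ Hfsum). exact (is_pseries_unique _ _ _ Hsum).
Qed.

Definition exp_coef (c : R) (k : nat) : R := c ^ k / INR (fact k).

(* The n-th Taylor coefficient of [e^(c t) * sum_k s k t^k / k!]; for [s k = (q^k)_ij]
   it is the entry of [(q + c I)^n / n!], which is nonnegative once [q + c I] is. *)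
Definition exp_mult_coef (c : R) (s : nat -> R) (n : nat) : R :=
  PS_mult (exp_coef c) (fun k => s k / INR (fact k)) n.

Lemma exp_coef_CV_radius c : 0 <= c -> CV_radius (exp_coef c) = p_infty.
Proof.
  intros Hc. apply (CV_radius_infinite _ c Hc). intros n. unfold exp_coef.
  rewrite Rabs_pos_eq; [lra|].
  apply Rmult_le_pos; [apply pow_le; auto | left; apply Rinv_0_lt_compat, INR_fact_lt_0].
Qed.

(* Coefficient form of [(e^(c t) F)' = e^(c t) F' + c e^(c t) F]. *)
Lemma exp_mult_coef_S c s n :
  INR (S n) * exp_mult_coef c s (S n) = exp_mult_coef c (fun k => s (S k)) n + c * exp_mult_coef c s n.
Proof.
  unfold exp_mult_coef, PS_mult. rewrite scal_sum.
  rewrite (sum_eq _ (fun k => INR k * exp_coef c k * (s (S n - k)%nat / INR (fact (S n - k)))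
                          + INR (S n - k) * exp_coef c k * (s (S n - k)%nat / INR (fact (S n - k)))))
    by (intros k Hk; rewrite minus_INR by lia; ring).
  rewrite sum_plus, Rplus_comm. f_equal.
  - rewrite tech5, Nat.sub_diag, INR_0, !Rmult_0_l, Rplus_0_r.
    apply sum_eq. intros k Hk. rewrite Nat.sub_succ_l, fact_simpl, mult_INR by lia.
    field. split; [apply INR_fact_neq_0 | apply not_0_INR; lia].
  - rewrite decomp_sum by lia. simpl pred. simpl INR at 1. rewrite !Rmult_0_l, Rplus_0_l.
    rewrite scal_sum. apply sum_eq. intros k Hk. unfold exp_coef. simpl (S n - S k)%nat.
    rewrite fact_simpl, mult_INR. simpl pow.
    field. repeat split; first [apply INR_fact_neq_0 | apply not_0_INR; lia].
Qed.

Lemma exp_mult_coef_fsum c n d (w : nat -> R) (s : nat -> nat -> R) :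
  exp_mult_coef c (fun k => fsum d (fun l => w l * s l k)) n
  = fsum d (fun l => w l * exp_mult_coef c (s l) n).
Proof.
  unfold exp_mult_coef, PS_mult.
  rewrite (sum_eq _ (fun k => fsum d (fun l => w l * (exp_coef c k * (s l (n - k)%nat / INR (fact (n - k)))))))
    by (intros; unfold Rdiv; rewrite <- fsum_scal_r, <- fsum_scal_l; apply fsum_ext; intros; ring).
  rewrite sum_f_R0_fsum_swap. apply fsum_ext. intros l _.
  rewrite scal_sum. apply sum_eq. intros. ring.
Qed.

Lemma exp_mult_coef_mpow_nonneg d q c :
  (forall a b, (a < d)%nat -> (b < d)%nat -> a <> b -> 0 <= q a b) ->
  (forall a, (a < d)%nat -> 0 <= q a a + c) ->
  forall n i j, (i < d)%nat -> (j < d)%nat -> 0 <= exp_mult_coef c (fun k => mpow d q k i j) n.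
Proof.
  intros Hoff Hdiag n. induction n as [|n IH]; intros i j Hi Hj.
  - unfold exp_mult_coef, PS_mult, exp_coef. simpl. unfold mid. destruct (Nat.eqb i j); lra.
  - apply (Rmult_le_reg_l (INR (S n))); [apply lt_0_INR; lia|].
    rewrite Rmult_0_r, exp_mult_coef_S.
    change (fun k => mpow d q (S k) i j) with (fun k => fsum d (fun l => q i l * mpow d q k l j)).
    rewrite exp_mult_coef_fsum,
      <- (fsum_mid_l d i (fun l => exp_mult_coef c (fun k => mpow d q k l j) n) Hi),
      <- fsum_scal_l, <- fsum_plus.
    apply fsum_nonneg. intros l Hl.
    rewrite <- Rmult_assoc, <- Rmult_plus_distr_r. apply Rmult_le_pos; [|apply IH; auto].
    unfold mid. destruct (Nat.eqb_spec i l) as [<-|Hil].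
    + rewrite Rmult_1_r. apply Hdiag; auto.
    + rewrite Rmult_0_r, Rplus_0_r. apply Hoff; auto.
Qed.

Lemma mexp_series_nonneg d q t i j :
  (forall a b, (a < d)%nat -> (b < d)%nat -> a <> b -> 0 <= q a b) ->
  0 <= t -> (i < d)%nat -> (j < d)%nat -> 0 <= mexp_series d q t i j.
Proof.
  intros Hoff Ht Hi Hj. set (c := mabs_sum d q).
  assert (Hc : 0 <= c) by apply mabs_sum_nonneg.
  assert (Hdiag : forall a, (a < d)%nat -> 0 <= q a a + c).
  { intros a Ha. pose proof (Rabs_le_mabs_sum d q a a Ha Ha) as Hqa. fold c in Hqa.
    apply Rabs_le_between in Hqa. lra. }
  assert (Hexp : Rbar_lt (Rabs t) (CV_radius (exp_coef c))) by (rewrite exp_coef_CV_radius; easy).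
  assert (Hmexp : Rbar_lt (Rabs t) (CV_radius (mexp_coef d q i j)))
    by (rewrite mexp_coef_CV_radius; easy).
  assert (Hprod : 0 <= PSeries (exp_coef c) t * mexp_series d q t i j).
  { unfold mexp_series. rewrite <- PSeries_mult by auto.
    eapply Rle_trans; [|apply (sum_f_R0_le_PSeries _ _ O Ht)].
    - cbn [sum_f_R0]. rewrite pow_O, Rmult_1_r.
      apply (exp_mult_coef_mpow_nonneg d q c Hoff Hdiag 0 i j Hi Hj).
    - apply ex_pseries_mult; auto.
    - intros n. apply (exp_mult_coef_mpow_nonneg d q c Hoff Hdiag n i j Hi Hj). }
  assert (Hexp1 : 1 <= PSeries (exp_coef c) t).
  { eapply Rle_trans; [|apply (sum_f_R0_le_PSeries _ _ O Ht)].
    - unfold exp_coef. simpl. lra.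
    - apply CV_radius_inside, Hexp.
    - intros n. unfold exp_coef.
      apply Rmult_le_pos; [apply pow_le; auto | left; apply Rinv_0_lt_compat, INR_fact_lt_0]. }
  nra.
Qed.

(** * The semigroups S_q *)

Lemma Rint_eq_RInt g a b : ex_RInt g a b -> Rint g a b = RInt g a b.
Proof.
  intros H. unfold Rint.
  set (pr := ex_RInt_Reals_0 _ _ _ H).
  destruct (epsilon_spec (inhabits 0)
              (fun I => exists pr : Riemann_integrable g a b, RiemannInt pr = I)
              (ex_intro _ _ (ex_intro _ pr eq_refl))) as [pr' <-].
  symmetry. apply RInt_Reals.
Qed.

Lemma is_derive_fsum d (F F' : nat -> R -> R) t :
  (forall j, (j < d)%nat -> is_derive (F j) t (F' j t)) ->
  is_derive (fun s => fsum d (fun j => F j s)) t (fsum d (fun j => F' j t)).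
Proof.
  induction d as [|d IH]; intros H.
  - rewrite fsum_0. apply (is_derive_ext (fun _ => 0)); [reflexivity | apply (is_derive_const 0)].
  - apply (is_derive_ext (fun s => plus (fsum d (fun j => F j s)) (F d s))).
    + intros. rewrite fsum_S. reflexivity.
    + rewrite fsum_S. apply (is_derive_plus (fun s => fsum d (fun j => F j s)) (F d)).
      * apply IH. intros. apply H. lia.
      * apply H. lia.
Qed.

Section Sq.
Variables (d : nat) (q : mat) (fq : vec).
Hypothesis Hq : isQmatrix d q.

Definition mexp_apply (t : R) (v : vec) i : R := fsum d (fun j => mexp_series d q t i j * v j).

Definition Sq_series (u : vec) i (t : R) : R :=
  mexp_apply t u i + RInt (fun s => mexp_apply s fq i) 0 t.

Lemma mv_mexp t v i : (i < d)%nat -> mv d (mexp d q t) v i = mexp_apply t v i.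
Proof. intros Hi. apply fsum_ext. intros. rewrite mexp_eq_series; auto. Qed.

Lemma mexp_apply_sub t u v i : mexp_apply t u i - mexp_apply t v i = mexp_apply t (vsub u v) i.
Proof.
  unfold mexp_apply, vsub.
  rewrite (fsum_ext _ (fun j => _ * (u j - v j))
             (fun j => mexp_series d q t i j * u j + -1 * (mexp_series d q t i j * v j)))
    by (intros; ring).
  rewrite fsum_plus, fsum_scal_l. ring.
Qed.

Lemma is_derive_mexp_apply v i t : (i < d)%nat ->
  is_derive (fun s => mexp_apply s v i) t (mexp_apply t (mv d q v) i).
Proof.
  intros Hi.
  replace (mexp_apply t (mv d q v) i)
    with (fsum d (fun j => fsum d (fun l => q l j * mexp_series d q t i l) * v j)).
  - apply (is_derive_fsum d (fun j s => mexp_series d q s i j * v j)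
             (fun j t => fsum d (fun l => q l j * mexp_series d q t i l) * v j)).
    intros j Hj. apply (is_derive_scal_l (fun s => mexp_series d q s i j) t _ (v j)).
    apply is_derive_mexp_series; auto.
  - unfold mexp_apply, mv.
    rewrite (fsum_ext _ _ (fun j => fsum d (fun l => q l j * mexp_series d q t i l * v j)))
      by (intros; rewrite <- fsum_scal_r; reflexivity).
    rewrite fsum_swap. apply fsum_ext. intros l _. rewrite <- fsum_scal_l. apply fsum_ext. intros; ring.
Qed.

Lemma continuous_mexp_apply v i t : (i < d)%nat -> continuous (fun s => mexp_apply s v i) t.
Proof.
  intros Hi. apply (@ex_derive_continuous R_AbsRing R_NormedModule).
  eexists. apply is_derive_mexp_apply; auto.
Qed.

Lemma ex_RInt_mexp_apply v i a b : (i < d)%nat -> ex_RInt (fun s => mexp_apply s v i) a b.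
Proof.
  intros Hi. apply (@ex_RInt_continuous R_CompleteNormedModule). intros.
  apply continuous_mexp_apply; auto.
Qed.

Lemma Sq_eq_series u i t : (i < d)%nat -> Sq d q fq t u i = Sq_series u i t.
Proof.
  intros Hi. unfold Sq, Sq_series. rewrite mv_mexp by auto. f_equal.
  rewrite (functional_extensionality (fun s => mv d (mexp d q s) fq i) (fun s => mexp_apply s fq i))
    by (intros; apply mv_mexp; auto).
  apply Rint_eq_RInt, ex_RInt_mexp_apply; auto.
Qed.

Lemma is_derive_Sq_series u i t : (i < d)%nat ->
  is_derive (Sq_series u i) t (mexp_apply t (vadd (mv d q u) fq) i).
Proof.
  intros Hi.
  replace (mexp_apply t (vadd (mv d q u) fq) i)
    with (plus (mexp_apply t (mv d q u) i) (mexp_apply t fq i)).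
  - apply (is_derive_plus (fun s => mexp_apply s u i) (fun s => RInt (fun s => mexp_apply s fq i) 0 s)).
    + apply is_derive_mexp_apply; auto.
    + apply (is_derive_RInt (fun s => mexp_apply s fq i) _ 0 t); [|apply continuous_mexp_apply; auto].
      apply filter_forall. intros x. apply (@RInt_correct R_CompleteNormedModule).
      apply ex_RInt_mexp_apply; auto.
  - unfold mexp_apply, vadd. change (plus ?a ?b) with (a + b). rewrite <- fsum_plus.
    apply fsum_ext. intros. ring.
Qed.

Lemma Rabs_mexp_apply_le t v i : 0 <= t -> (i < d)%nat -> Rabs (mexp_apply t v i) <= vnorm d v.
Proof.
  intros Ht Hi. destruct Hq as [_ [Hoff Hrow]].
  assert (Hnn : forall j, (j < d)%nat -> 0 <= mexp_series d q t i j)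
    by (intros; apply mexp_series_nonneg; auto).
  eapply Rle_trans; [apply fsum_abs|].
  eapply Rle_trans; [apply (fsum_le _ _ (fun j => mexp_series d q t i j * vnorm d v))|].
  - intros j Hj. rewrite Rabs_mult, (Rabs_pos_eq (mexp_series d q t i j)) by auto.
    apply Rmult_le_compat_l; [auto | apply Rabs_le_vnorm; auto].
  - rewrite fsum_scal_r, mexp_series_row_sum by auto. lra.
Qed.

Lemma Rabs_Sq_sub_time u i a b : (i < d)%nat -> 0 <= a -> 0 <= b ->
  Rabs (Sq d q fq a u i - Sq d q fq b u i) <= Rabs (a - b) * vnorm d (vadd (mv d q u) fq).
Proof.
  intros Hi Ha Hb. rewrite !Sq_eq_series by auto.
  destruct (MVT_gen (Sq_series u i) b a (fun t => mexp_apply t (vadd (mv d q u) fq) i))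
    as [c [Hc ->]].
  - intros. apply is_derive_Sq_series; auto.
  - intros x _. apply continuity_pt_filterlim, (@ex_derive_continuous R_AbsRing R_NormedModule).
    eexists. apply is_derive_Sq_series; auto.
  - rewrite Rabs_mult, Rmult_comm. apply Rmult_le_compat_l; [apply Rabs_pos|].
    apply Rabs_mexp_apply_le; auto.
    assert (0 <= Rmin b a) by (apply Rmin_glb; auto). lra.
Qed.

Lemma Sq_0 u i : (i < d)%nat -> Sq d q fq 0 u i = u i.
Proof.
  intros Hi. rewrite Sq_eq_series by auto. unfold Sq_series, mexp_apply. rewrite RInt_point.
  rewrite (fsum_ext _ _ (fun j => mid i j * u j)) by (intros; rewrite mexp_series_0; reflexivity).
  rewrite fsum_mid_l by auto. change zero with 0. ring.
Qed.

Lemma Rabs_Sq_sub_le u v i t : (i < d)%nat -> 0 <= t ->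
  Rabs (Sq d q fq t u i - Sq d q fq t v i) <= vnorm d (vsub u v).
Proof.
  intros Hi Ht. rewrite !Sq_eq_series by auto. unfold Sq_series.
  replace (_ - _) with (mexp_apply t u i - mexp_apply t v i) by ring.
  rewrite mexp_apply_sub. apply Rabs_mexp_apply_le; auto.
Qed.

End Sq.

(** * The operators E_h and the Nisio semigroup *)

Lemma Rsup_correct (E : R -> Prop) :
  (exists x, E x) -> (exists B, forall x, E x -> x <= B) -> is_lub E (Rsup E).
Proof.
  intros Hne [B HB]. destruct (completeness E (ex_intro _ B HB) Hne) as [m Hm].
  exact (epsilon_spec (inhabits 0) (fun l => is_lub E l) (ex_intro _ m Hm)).
Qed.

Lemma lub_le_shift (E F : R -> Prop) a b c : is_lub E a -> is_lub F b ->
  (forall x, E x -> exists y, F y /\ x <= y + c) -> a <= b + c.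
Proof.
  intros [_ Ha] [Hb _] H. apply Ha. intros x Hx.
  destruct (H x Hx) as [y [Hy Hxy]]. specialize (Hb y Hy). lra.
Qed.

Lemma Rabs_lub_image_sub {A : Type} (P : A -> Prop) (g h : A -> R) a b c :
  is_lub (fun x => exists q, P q /\ x = g q) a ->
  is_lub (fun x => exists q, P q /\ x = h q) b ->
  (forall q, P q -> Rabs (g q - h q) <= c) -> Rabs (a - b) <= c.
Proof.
  intros Ha Hb H. apply Rabs_le_between.
  assert (a <= b + c).
  { apply (lub_le_shift _ _ _ _ _ Ha Hb). intros x [q [Hq ->]].
    exists (h q). split; [exists q; auto|]. specialize (H q Hq). apply Rabs_le_between in H. lra. }
  assert (b <= a + c).
  { apply (lub_le_shift _ _ _ _ _ Hb Ha). intros x [q [Hq ->]].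
    exists (g q). split; [exists q; auto|]. specialize (H q Hq). apply Rabs_le_between in H. lra. }
  lra.
Qed.

Lemma Rabs_lub_sub_le (E : R -> Prop) a y c : is_lub E a -> (exists x, E x) ->
  (forall x, E x -> Rabs (x - y) <= c) -> Rabs (a - y) <= c.
Proof.
  intros [Hub Hl] [x Hx] H. apply Rabs_le_between. split.
  - pose proof (Hub x Hx). specialize (H x Hx). apply Rabs_le_between in H. lra.
  - cut (a <= y + c); [lra|]. apply Hl. intros z Hz.
    specialize (H z Hz). apply Rabs_le_between in H. lra.
Qed.

Section Nisio.
Variables (d : nat) (P : mat -> Prop) (f : mat -> vec) (q0 : mat) (M : R).
Hypothesis HPQ : forall q, P q -> isQmatrix d q.
Hypothesis Hq0 : P q0.
Hypothesis HM : forall q, P q -> vnorm d (f q) <= M.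

Lemma Eh_lub h u i : 0 <= h -> (i < d)%nat ->
  is_lub (fun x => exists q, P q /\ x = Sq d q (f q) h u i) (Eh d P f h u i).
Proof.
  intros Hh Hi. apply Rsup_correct; [exists (Sq d q0 (f q0) h u i), q0; auto|].
  exists (vnorm d u + h * M). intros x [q [Hq ->]].
  pose proof (Rabs_Sq_sub_le d q (f q) (HPQ q Hq) u (fun _ => 0) i h Hi Hh) as Hspace.
  pose proof (Rabs_Sq_sub_time d q (f q) (HPQ q Hq) (fun _ => 0) i h 0 Hi Hh (Rle_refl 0)) as Htime.
  rewrite Sq_0 in Htime by auto.
  rewrite (vnorm_ext d (vsub u (fun _ => 0)) u) in Hspace by (intros; unfold vsub; ring).
  rewrite (vnorm_ext d (vadd (mv d q (fun _ => 0)) (f q)) (f q)) in Htime.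
  2:{ intros j Hj. unfold vadd, mv. rewrite (fsum_ext _ _ (fun _ => 0)), fsum_const by (intros; ring).
      ring. }
  rewrite Rminus_0_r, Rminus_0_r, (Rabs_pos_eq h Hh) in Htime.
  apply Rabs_le_between in Hspace. apply Rabs_le_between in Htime.
  assert (h * vnorm d (f q) <= h * M) by (apply Rmult_le_compat_l; auto). lra.
Qed.

Lemma Eh_0 u i : (i < d)%nat -> Eh d P f 0 u i = u i.
Proof.
  intros Hi. destruct (Eh_lub 0 u i (Rle_refl 0) Hi) as [Hub Hl]. apply Rle_antisym.
  - apply Hl. intros x [q [Hq ->]]. rewrite Sq_0; auto. lra.
  - apply Hub. exists q0. rewrite Sq_0; auto.
Qed.

Lemma Eh_nonexpansive h u v : 0 <= h ->
  vnorm d (vsub (Eh d P f h u) (Eh d P f h v)) <= vnorm d (vsub u v).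
Proof.
  intros Hh. apply vnorm_le; [apply vnorm_nonneg|]. intros i Hi.
  apply (Rabs_lub_image_sub P _ _ _ _ _ (Eh_lub h u i Hh Hi) (Eh_lub h v i Hh Hi)).
  intros q Hq. apply Rabs_Sq_sub_le; auto.
Qed.

Lemma Eh_sub_time u L a b : 0 <= L -> (forall q, P q -> vnorm d (vadd (mv d q u) (f q)) <= L) ->
  0 <= a -> 0 <= b -> vnorm d (vsub (Eh d P f a u) (Eh d P f b u)) <= Rabs (a - b) * L.
Proof.
  intros HL0 HL Ha Hb. apply vnorm_le; [apply Rmult_le_pos; auto using Rabs_pos|]. intros i Hi.
  apply (Rabs_lub_image_sub P _ _ _ _ _ (Eh_lub a u i Ha Hi) (Eh_lub b u i Hb Hi)).
  intros q Hq. eapply Rle_trans; [apply Rabs_Sq_sub_time; auto|].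
  apply Rmult_le_compat_l; [apply Rabs_pos | auto].
Qed.

Lemma Eh_sub_init u L h : 0 <= L -> (forall q, P q -> vnorm d (vadd (mv d q u) (f q)) <= L) ->
  0 <= h -> vnorm d (vsub (Eh d P f h u) u) <= h * L.
Proof.
  intros HL0 HL Hh.
  rewrite (vnorm_ext d _ (vsub (Eh d P f h u) (Eh d P f 0 u)))
    by (intros; unfold vsub; rewrite Eh_0; auto).
  replace (h * L) with (Rabs (h - 0) * L) by (rewrite Rminus_0_r, Rabs_pos_eq; auto).
  apply Eh_sub_time; auto. lra.
Qed.

Variables (u0 : vec) (L : R).
Hypothesis HL0 : 0 <= L.
Hypothesis HL : forall q, P q -> vnorm d (vadd (mv d q u0) (f q)) <= L.

Lemma Ecomp_cons a b r u : Ecomp d P f (a :: b :: r) u = Eh d P f (b - a) (Ecomp d P f (b :: r) u).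
Proof. reflexivity. Qed.

Lemma Ecomp_nonexpansive l u v : Sorted Rlt l ->
  vnorm d (vsub (Ecomp d P f l u) (Ecomp d P f l v)) <= vnorm d (vsub u v).
Proof.
  induction l as [|a [|b r] IH]; intros Hs; [simpl; lra | simpl; lra|].
  apply Sorted_inv in Hs as [Hs Hab]. apply HdRel_inv in Hab.
  rewrite !Ecomp_cons. eapply Rle_trans; [apply Eh_nonexpansive; lra | apply IH; auto].
Qed.

Lemma Ecomp_sub_init l a : Sorted Rlt (a :: l) ->
  vnorm d (vsub (Ecomp d P f (a :: l) u0) u0) <= (last (a :: l) 0 - a) * L.
Proof.
  revert a. induction l as [|b r IH]; intros a Hs.
  - simpl. rewrite vnorm_sub_diag. lra.
  - apply Sorted_inv in Hs as [Hs Hab]. apply HdRel_inv in Hab.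
    rewrite Ecomp_cons. change (last (a :: b :: r) 0) with (last (b :: r) 0).
    eapply Rle_trans; [apply (vnorm_sub_triangle _ _ (Eh d P f (b - a) u0))|].
    pose proof (Eh_nonexpansive (b - a) (Ecomp d P f (b :: r) u0) u0 ltac:(lra)).
    pose proof (IH b Hs). pose proof (Eh_sub_init u0 L (b - a) HL0 HL ltac:(lra)). lra.
Qed.

(* Cutting a partition of [a, T] at [s]: the evolution up to [s] is kept, the last
   step across [s] is shortened, and the rest moves [u0] by at most [(T - s) L]. *)
Lemma Ecomp_cut l a s : Sorted Rlt (a :: l) -> a <= s <= last (a :: l) 0 ->
  exists l', Sorted Rlt (a :: l') /\ last (a :: l') 0 = s /\
    vnorm d (vsub (Ecomp d P f (a :: l) u0) (Ecomp d P f (a :: l') u0))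
      <= (last (a :: l) 0 - s) * L.
Proof.
  revert a. induction l as [|b r IH]; intros a Hs Has.
  - simpl in Has. assert (s = a) as -> by lra. exists nil.
    split; [auto | split; [reflexivity|]]. rewrite vnorm_sub_diag. simpl. lra.
  - pose proof Hs as Hs0. apply Sorted_inv in Hs as [Hs Hab]. apply HdRel_inv in Hab.
    change (last (a :: b :: r) 0) with (last (b :: r) 0) in *.
    destruct (Rle_lt_dec b s) as [Hbs|Hsb].
    + destruct (IH b Hs ltac:(lra)) as [l' [Hs' [Hl' Hn']]].
      exists (b :: l'). split; [constructor; auto|]. split; [exact Hl'|].
      rewrite !Ecomp_cons. eapply Rle_trans; [apply Eh_nonexpansive; lra | exact Hn'].
    + destruct (Req_dec s a) as [->|Hsa].
      * exists nil. split; [constructor; auto|]. split; [reflexivity|].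
        exact (Ecomp_sub_init (b :: r) a Hs0).
      * exists (s :: nil). split; [constructor; constructor; auto; lra|]. split; [reflexivity|].
        rewrite !Ecomp_cons. change (Ecomp d P f (s :: nil) u0) with u0.
        eapply Rle_trans; [apply (vnorm_sub_triangle _ _ (Eh d P f (b - a) u0))|].
        pose proof (Eh_nonexpansive (b - a) (Ecomp d P f (b :: r) u0) u0 ltac:(lra)) as Hcontr.
        pose proof (Ecomp_sub_init r b Hs) as Hrest.
        pose proof (Eh_sub_time u0 L (b - a) (s - a) HL0 HL ltac:(lra) ltac:(lra)) as Hstep.
        rewrite Rabs_pos_eq in Hstep by lra. lra.
Qed.

Lemma Ecomp_snoc l a t :
  Ecomp d P f ((a :: l) ++ t :: nil) u0 = Ecomp d P f (a :: l) (Eh d P f (t - last (a :: l) 0) u0).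
Proof.
  revert a. induction l as [|b r IH]; intros a; [reflexivity|].
  change ((a :: b :: r) ++ t :: nil) with (a :: (b :: r) ++ t :: nil).
  rewrite !Ecomp_cons, <- IH. reflexivity.
Qed.

Lemma Sorted_snoc l a t : Sorted Rlt (a :: l) -> last (a :: l) 0 < t -> Sorted Rlt ((a :: l) ++ t :: nil).
Proof.
  revert a. induction l as [|b r IH]; intros a Hs Ht; [constructor; constructor; auto|].
  apply Sorted_inv in Hs as [Hs Hab]. apply HdRel_inv in Hab.
  constructor; [apply IH; auto | constructor; auto].
Qed.

Lemma Epi_eq_Ecomp l i : (i < d)%nat -> Epi d P f l u0 i = Ecomp d P f l u0 i.
Proof. intros Hi. destruct l as [|a [|b r]]; try reflexivity. apply Eh_0; auto. Qed.

Lemma inPt_cons t r : inPt t (0 :: r) <-> Sorted Rlt (0 :: r) /\ last (0 :: r) 0 = t.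
Proof. unfold inPt. simpl. split; [tauto | intros; repeat split; tauto || congruence]. Qed.

Lemma Nisio_set_bound t i x : (i < d)%nat ->
  (exists l, inPt t l /\ x = Epi d P f l u0 i) -> Rabs (x - u0 i) <= t * L.
Proof.
  intros Hi [[|a r] [[Hne [Ha [Hs Hl]]] ->]]; [congruence|]. simpl in Ha. subst a.
  rewrite Epi_eq_Ecomp by auto. rewrite <- Hl, <- (Rminus_0_r (last _ _)).
  eapply Rle_trans; [|exact (Ecomp_sub_init r 0 Hs)].
  exact (Rabs_le_vnorm d (vsub (Ecomp d P f (0 :: r) u0) u0) i Hi).
Qed.

Lemma Nisio_set_nonempty t i : 0 <= t -> exists x l, inPt t l /\ x = Epi d P f l u0 i.
Proof.
  intros Ht. destruct (Req_dec t 0) as [->|Ht0].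
  - exists (Epi d P f (0 :: nil) u0 i), (0 :: nil). split; auto.
    apply inPt_cons. split; [constructor; auto | reflexivity].
  - exists (Epi d P f (0 :: t :: nil) u0 i), (0 :: t :: nil). split; auto.
    apply inPt_cons. split; [constructor; constructor; auto; lra | reflexivity].
Qed.

Lemma Nisio_lub t i : 0 <= t -> (i < d)%nat ->
  is_lub (fun x => exists l, inPt t l /\ x = Epi d P f l u0 i) (Nisio d P f t u0 i).
Proof.
  intros Ht Hi. apply Rsup_correct; [apply Nisio_set_nonempty; auto|].
  exists (u0 i + t * L). intros x Hx.
  apply Nisio_set_bound in Hx; auto. apply Rabs_le_between in Hx. lra.
Qed.

Lemma Rabs_Nisio_sub_init t i : 0 <= t -> (i < d)%nat -> Rabs (Nisio d P f t u0 i - u0 i) <= t * L.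
Proof.
  intros Ht Hi. apply (Rabs_lub_sub_le _ _ _ _ (Nisio_lub t i Ht Hi)).
  - apply Nisio_set_nonempty; auto.
  - intros x Hx. apply Nisio_set_bound; auto.
Qed.

Lemma Nisio_le_refine s t i : 0 <= s <= t -> (i < d)%nat ->
  Nisio d P f s u0 i <= Nisio d P f t u0 i + (t - s) * L.
Proof.
  intros Hst Hi. apply (lub_le_shift _ _ _ _ _ (Nisio_lub s i ltac:(lra) Hi) (Nisio_lub t i ltac:(lra) Hi)).
  intros x [[|a r] [[Hne [Ha [Hs Hl]]] ->]]; [congruence|]. simpl in Ha. subst a.
  destruct (Req_dec s t) as [<-|Hne'].
  - exists (Epi d P f (0 :: r) u0 i). split; [exists (0 :: r); split; [apply inPt_cons; auto | reflexivity]|].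
    lra.
  - exists (Epi d P f ((0 :: r) ++ t :: nil) u0 i). split.
    + exists ((0 :: r) ++ t :: nil). split; [|reflexivity]. apply inPt_cons. split.
      * apply Sorted_snoc; auto. lra.
      * exact (last_last (0 :: r) t 0).
    + rewrite !Epi_eq_Ecomp, Ecomp_snoc, Hl by auto.
      pose proof (Ecomp_nonexpansive (0 :: r) u0 (Eh d P f (t - s) u0) Hs) as Hcontr.
      pose proof (Eh_sub_init u0 L (t - s) HL0 HL ltac:(lra)) as Hstep.
      rewrite vnorm_sub_sym in Hstep.
      pose proof (Rabs_le_vnorm d (vsub (Ecomp d P f (0 :: r) u0)
                                       (Ecomp d P f (0 :: r) (Eh d P f (t - s) u0))) i Hi) as Hi'.
      unfold vsub at 1 in Hi'. apply Rabs_le_between in Hi'. lra.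
Qed.

Lemma Nisio_le_cut s t i : 0 <= s <= t -> (i < d)%nat ->
  Nisio d P f t u0 i <= Nisio d P f s u0 i + (t - s) * L.
Proof.
  intros Hst Hi. apply (lub_le_shift _ _ _ _ _ (Nisio_lub t i ltac:(lra) Hi) (Nisio_lub s i ltac:(lra) Hi)).
  intros x [[|a r] [[Hne [Ha [Hs Hl]]] ->]]; [congruence|]. simpl in Ha. subst a.
  destruct (Ecomp_cut r 0 s Hs ltac:(rewrite Hl; lra)) as [l' [Hs' [Hl' Hcut]]].
  exists (Epi d P f (0 :: l') u0 i). split; [exists (0 :: l'); split; [apply inPt_cons; auto | reflexivity]|].
  rewrite !Epi_eq_Ecomp by auto. rewrite Hl in Hcut.
  pose proof (Rabs_le_vnorm d (vsub (Ecomp d P f (0 :: r) u0) (Ecomp d P f (0 :: l') u0)) i Hi) as Hi'.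
  unfold vsub at 1 in Hi'. apply Rabs_le_between in Hi'. lra.
Qed.

Lemma Nisio_sub_init t : 0 <= t -> vnorm d (vsub (Nisio d P f t u0) u0) <= t * L.
Proof.
  intros Ht. apply vnorm_le; [apply Rmult_le_pos; auto|].
  intros i Hi. apply Rabs_Nisio_sub_init; auto.
Qed.

Lemma Nisio_sub s t : 0 <= s <= t ->
  vnorm d (vsub (Nisio d P f t u0) (Nisio d P f s u0)) <= (t - s) * L.
Proof.
  intros Hst. apply vnorm_le; [apply Rmult_le_pos; lra|]. intros i Hi.
  pose proof (Nisio_le_refine s t i Hst Hi). pose proof (Nisio_le_cut s t i Hst Hi).
  unfold vsub. apply Rabs_le_between. lra.
Qed.

End Nisio.

Theorem mainTheorem4 (d : nat) (P : mat -> Prop) (f : mat -> vec) :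
  standing_setup d P f ->
  (exists M, forall q, P q -> vnorm d (f q) <= M) ->
  forall (u0 : vec) (L : R),
    (forall q, P q -> vnorm d (vadd (mv d q u0) (f q)) <= L) ->
    (forall t, 0 <= t ->
       vnorm d (vsub (Nisio d P f t u0) u0) <= t * L) /\
    (forall s t, 0 <= s -> 0 <= t ->
       vnorm d (vsub (Nisio d P f t u0) (Nisio d P f s u0)) <= Rabs (t - s) * L).
Proof.
  intros [HPQ [[q0 [Hq0 _]] _]] [M HM] u0 L HL.
  assert (HL0 : 0 <= L) by exact (Rle_trans _ _ _ (vnorm_nonneg _ _) (HL q0 Hq0)).
  split.
  - exact (Nisio_sub_init d P f q0 M HPQ Hq0 HM u0 L HL0 HL).
  - intros s t Hs Ht. destruct (Rle_dec s t) as [Hst|Hts].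
    + rewrite Rabs_pos_eq by lra. apply (Nisio_sub d P f q0 M HPQ Hq0 HM u0 L HL0 HL). lra.
    + rewrite vnorm_sub_sym, Rabs_minus_sym, Rabs_pos_eq by lra.
      apply (Nisio_sub d P f q0 M HPQ Hq0 HM u0 L HL0 HL). lra.
Qed.
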